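(* Let $n,m,N$ be positive integers with $n>m$ and $\frac{n-1}{n-m}\leq N\leq m$. For almost all $X_0\in\mathbb{C}^{m\times N}$ and $A\in\mathbb{C}^{n\times m}$ (outside a Lebesgue-null set), the $(1+n(N-1))\times mN$ matrix \[ \begin{bmatrix} \operatorname{vec}(X_0)^*\\ D(A^{(1,:)},X_0)\\ \vdots\\ D(A^{(n,:)},X_0) \end{bmatrix} \] has full column rank $mN$.
   Context: $\operatorname{vec}(X)$ is the column vector obtained by stacking the columns of $X$; $^*$ denotes conjugate transpose; $\otimes$ is the Kronecker product. $A^{(k,:)}\in\mathbb{C}^{1\times m}$ is the $k$th row of $A$ and $X_0^{(:,j)}$ the $j$th column of $X_0$. For a row vector $a\in\mathbb{C}^{1\times m}$ and $X_0\in\mathbb{C}^{m\times N}$, $D(a,X_0)\in\mathbb{C}^{(N-1)\times mN}$ is defined as $D(a,X_0)=B\otimes a$, where $B\in\mathbb{C}^{(N-1)\times N}$ has, in its row $i-1$ (for $i=2,\dots,N$), entry $-aX_0^{(:,i)}$ in column $1$, entry $aX_0^{(:,1)}$ in column $i$, and zeros elsewhere. *)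

From Stdlib Require Import Reals Lra Lia Arith.
Open Scope R_scope.

Definition C := (R * R)%type.
Definition C0 : C := (0, 0).
Definition Cadd (z w : C) : C := (fst z + fst w, snd z + snd w).
Definition Cmul (z w : C) : C :=
  (fst z * fst w - snd z * snd w, fst z * snd w + snd z * fst w).
Definition Copp (z : C) : C := (- fst z, - snd z).
Definition Cconj (z : C) : C := (fst z, - snd z).

Fixpoint Csum (n : nat) (f : nat -> C) : C :=
  match n with O => C0 | S k => Cadd (Csum k f) (f k) end.

(* A matrix is given by its entries (0-based); dimensions are carried separately. *)
Definition cmat := nat -> nat -> C.

Definition rowcol (m : nat) (a : nat -> C) (X0 : cmat) (j : nat) : C :=
  Csum m (fun i => Cmul (a i) (X0 i j)).

(* B in R^{(N-1) x N}: 0-based row r (paper's row i-1 with i = r+2):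
   column 0 holds - a X0^{(:,r+1)}, column r+1 holds a X0^{(:,0)}, zero elsewhere. *)
Definition Bmat (m : nat) (a : nat -> C) (X0 : cmat) (r j : nat) : C :=
  if Nat.eqb j 0 then Copp (rowcol m a X0 (S r))
  else if Nat.eqb j (S r) then rowcol m a X0 0
  else C0.

(* D(a,X0) = B (x) a, a of size 1 x m: entry (r, j*m + i) = B r j * a i *)
Definition Dmat (m : nat) (a : nat -> C) (X0 : cmat) (r c : nat) : C :=
  Cmul (Bmat m a X0 r (c / m)%nat) (a (c mod m)%nat).

(* The (1 + n(N-1)) x mN matrix [vec(X0)^*; D(A^{(1,:)},X0); ...; D(A^{(n,:)},X0)].
   vec stacks columns: vec(X0) entry i + m*j is X0 i j. *)
Definition bigM (n m N : nat) (X0 A : cmat) (row col : nat) : C :=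
  if Nat.eqb row 0 then Cconj (X0 (col mod m)%nat (col / m)%nat)
  else Dmat m (fun i => A ((row - 1) / (N - 1))%nat i) X0
            ((row - 1) mod (N - 1))%nat col.

Definition full_column_rank (nr nc : nat) (M : cmat) : Prop :=
  forall v : nat -> C,
    (forall row, (row < nr)%nat -> Csum nc (fun c => Cmul (M row c) (v c)) = C0) ->
    forall c, (c < nc)%nat -> v c = C0.

(* Lebesgue null sets of R^d (points: functions nat -> R, first d coordinates) *)
Fixpoint Rprod (d : nat) (f : nat -> R) : R :=
  match d with O => 1 | S k => Rprod k f * f k end.
Fixpoint Rsum (K : nat) (f : nat -> R) : R :=
  match K with O => 0 | S k => Rsum k f + f k end.

Definition lebesgue_null (d : nat) (E : (nat -> R) -> Prop) : Prop :=
  forall eps, 0 < eps ->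
    exists a b : nat -> nat -> R,
      (forall p i, a p i <= b p i) /\
      (forall x, E x -> exists p, forall i, (i < d)%nat -> a p i <= x i <= b p i) /\
      (forall K, Rsum K (fun p => Rprod d (fun i => b p i - a p i)) <= eps).

(* Identification of C^{m x N} x C^{n x m} with R^(2mN + 2nm) *)
Definition decX (m : nat) (x : nat -> R) : cmat :=
  fun i j => (x (2 * (i + m * j))%nat, x (2 * (i + m * j) + 1)%nat).
Definition decA (n m N : nat) (x : nat -> R) : cmat :=
  fun k i => (x (2 * (m * N) + 2 * (k + n * i))%nat,
              x (2 * (m * N) + 2 * (k + n * i) + 1)%nat).

(* At a point x of R^(2mN+2nm), the matrix M(x) has full column rank iff
   the Gram determinant det (R^T R) of its realification R, the real matrix of M(x)
   acting on C^(mN) = R^(mN) x R^(mN), is nonzero; this determinant is a real polynomial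
   in x.  The zero set of a real polynomial that is not identically zero is null: by
   induction on the number of variables, expand it in the last one; off the zero set of
   the top coefficient, every zero is a zero of some derivative in the last variable at
   which the next derivative does not vanish, and near such points the zero set is a
   Lipschitz graph over the other coordinates.  It remains to exhibit one point of full
   column rank: X0 made of the first N columns of the identity and an explicit 0/1/2
   matrix A, whose rows suffice to kill the kernel because n - 1 <= N (n - m). *)

From Stdlib Require Import Reals Lra Lia Arith ZArith Cantor.
From Stdlib Require Import FunctionalExtensionality Classical IndefiniteDescription.
Open Scope R_scope.

Lemma Rabs_le_inv x a : Rabs x <= a -> - a <= x <= a.
Proof. unfold Rabs; destruct (Rcase_abs x); intros; lra. Qed.

Lemma exists_nat_gt r : exists M, (0 < M)%nat /\ r < INR M.
Proof.
  destruct (INR_unbounded r) as [M HM]. exists (S M). split; [lia|].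
  rewrite S_INR. lra.
Qed.

Lemma grid_index a delta x : 0 < delta -> a <= x ->
  exists k : nat, a + INR k * delta <= x < a + INR k * delta + delta.
Proof.
  intros Hd Hx. set (u := (x - a) / delta).
  assert (Hu : 0 <= u) by (apply Rmult_le_pos; [lra | apply Rlt_le, Rinv_0_lt_compat; lra]).
  destruct (Zfloor_bound u) as [H1 H2].
  assert (H0 : (0 <= Zfloor u)%Z) by (apply Zfloor_lub; exact Hu).
  exists (Z.to_nat (Zfloor u)). rewrite INR_IZR_INZ, Z2Nat.id by exact H0.
  assert (Hx' : x = a + u * delta) by (unfold u; field; lra).
  rewrite Hx'. split; nra.
Qed.

Lemma grid_index_lt a delta x M : 0 < delta -> (0 < M)%nat -> a <= x <= a + INR M * delta ->
  exists k : nat, (k < M)%nat /\ a + INR k * delta <= x <= a + INR k * delta + delta.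
Proof.
  intros Hd HM Hx. destruct (grid_index a delta x Hd (proj1 Hx)) as [k Hk].
  destruct (Nat.lt_ge_cases k M) as [Hlt | Hge].
  - exists k. split; [exact Hlt | lra].
  - exists (M - 1)%nat. split; [lia|].
    apply le_INR in Hge. rewrite minus_INR by lia. change (INR 1) with 1. nra.
Qed.

Lemma Rsum_ext K f g : (forall i, (i < K)%nat -> f i = g i) -> Rsum K f = Rsum K g.
Proof.
  induction K; simpl; intros H; [reflexivity|].
  rewrite IHK by (intros; apply H; lia). rewrite H by lia. reflexivity.
Qed.

Lemma Rsum_zero K f : (forall i, (i < K)%nat -> f i = 0) -> Rsum K f = 0.
Proof.
  induction K; simpl; intros H; [reflexivity|].
  rewrite IHK by (intros; apply H; lia). rewrite H by lia. ring.
Qed.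

Lemma Rsum_le K f g : (forall i, (i < K)%nat -> f i <= g i) -> Rsum K f <= Rsum K g.
Proof.
  induction K; simpl; intros H; [lra|].
  assert (Rsum K f <= Rsum K g) by (apply IHK; intros; apply H; lia).
  specialize (H K ltac:(lia)). lra.
Qed.

Lemma Rsum_nonneg K f : (forall i, (i < K)%nat -> 0 <= f i) -> 0 <= Rsum K f.
Proof. intros H. rewrite <- (Rsum_zero K (fun _ => 0)) by reflexivity. apply Rsum_le, H. Qed.

Lemma Rsum_add K f g : Rsum K (fun i => f i + g i) = Rsum K f + Rsum K g.
Proof. induction K; simpl; [lra|]. rewrite IHK; lra. Qed.

Lemma Rsum_scal K c f : Rsum K (fun i => c * f i) = c * Rsum K f.
Proof. induction K; simpl; [lra|]. rewrite IHK; lra. Qed.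

Lemma Rsum_const K c : Rsum K (fun _ => c) = INR K * c.
Proof. induction K; simpl Rsum; [simpl; ring|]. rewrite IHK, S_INR. ring. Qed.

Lemma Rsum_shift K f : Rsum (S K) f = f 0%nat + Rsum K (fun i => f (S i)).
Proof. induction K; simpl in *; [ring|]. rewrite IHK. ring. Qed.

Lemma Rsum_split a b h : Rsum (a + b) h = Rsum a h + Rsum b (fun i => h (a + i)%nat).
Proof.
  induction b; simpl; [rewrite Nat.add_0_r; lra|].
  rewrite Nat.add_succ_r; simpl. rewrite IHb; lra.
Qed.

Lemma Rsum_blocks k K h :
  Rsum (k * K) h = Rsum k (fun a => Rsum K (fun p => h (a * K + p)%nat)).
Proof.
  induction k; simpl; [reflexivity|].
  replace (K + k * K)%nat with (k * K + K)%nat by lia.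
  rewrite Rsum_split, IHk. reflexivity.
Qed.

Lemma Rsum_padding K K1 g : (K1 <= K)%nat ->
  (forall i, (K1 <= i)%nat -> g i = 0) -> Rsum K g = Rsum K1 g.
Proof.
  intros HK Hg. replace K with (K1 + (K - K1))%nat by lia.
  rewrite Rsum_split, (Rsum_zero (K - K1)); [ring|]. intros; apply Hg; lia.
Qed.

Lemma Rsum_term K f i : (forall j, (j < K)%nat -> 0 <= f j) -> (i < K)%nat -> f i <= Rsum K f.
Proof.
  induction K; intros H Hi; [lia|]. simpl.
  assert (0 <= Rsum K f) by (apply Rsum_nonneg; intros; apply H; lia).
  pose proof (H K ltac:(lia)). destruct (Nat.eq_dec i K) as [->|]; [lra|].
  assert (f i <= Rsum K f) by (apply IHK; [intros; apply H; lia | lia]). lra.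
Qed.

Lemma Rsum_drop J a h : (a < J)%nat ->
  Rsum J (fun i => if Nat.eqb i a then 0 else h i) = Rsum J h - h a.
Proof.
  induction J; intros Ha; [lia|]. simpl.
  destruct (Nat.eq_dec a J) as [->|Hne].
  - rewrite Nat.eqb_refl, (Rsum_ext J _ h); [lra|].
    intros i Hi. destruct (Nat.eqb_spec i J); [lia | reflexivity].
  - rewrite IHJ by lia. destruct (Nat.eqb_spec J a); [lia | lra].
Qed.

Lemma Rsum_reindex_le K J (f : nat -> nat) h :
  (forall i, 0 <= h i) -> (forall q, (q < K)%nat -> (f q < J)%nat) ->
  (forall q1 q2, (q1 < K)%nat -> (q2 < K)%nat -> f q1 = f q2 -> q1 = q2) ->
  Rsum K (fun q => h (f q)) <= Rsum J h.
Proof.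
  revert h. induction K; intros h Hh Hf Hinj; simpl.
  - apply Rsum_nonneg; intros; apply Hh.
  - set (h' := fun i => if Nat.eqb i (f K) then 0 else h i).
    assert (E : Rsum K (fun q => h (f q)) = Rsum K (fun q => h' (f q))).
    { apply Rsum_ext. intros i Hi. unfold h'. destruct (Nat.eqb_spec (f i) (f K)); [|reflexivity].
      apply Hinj in e; lia. }
    assert (Hle : Rsum K (fun q => h' (f q)) <= Rsum J h').
    { apply IHK; [| intros; apply Hf; lia | intros; apply Hinj; lia].
      intros i; unfold h'; destruct (Nat.eqb i (f K)); [lra | apply Hh]. }
    unfold h' at 2 in Hle. rewrite Rsum_drop in Hle by (apply Hf; lia). lra.
Qed.

Lemma Rsum_halves K eps : 0 <= eps -> Rsum K (fun k => eps / 2 ^ S k) <= eps.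
Proof.
  intros He. enough (Rsum K (fun k => eps / 2 ^ S k) = eps - eps / 2 ^ K) as ->.
  { assert (0 < 2 ^ K) by (apply pow_lt; lra).
    assert (0 <= eps / 2 ^ K) by (apply Rmult_le_pos; [lra | apply Rlt_le, Rinv_0_lt_compat; lra]). lra. }
  induction K; [simpl; field|].
  change (Rsum (S K) ?f) with (Rsum K f + f K). rewrite IHK. simpl. field. apply pow_nonzero. lra.
Qed.

Lemma Rprod_nonneg d f : (forall i, (i < d)%nat -> 0 <= f i) -> 0 <= Rprod d f.
Proof.
  induction d; simpl; intros H; [lra|].
  apply Rmult_le_pos; [apply IHd; intros; apply H; lia | apply H; lia].
Qed.

Lemma Rprod_ext d f g : (forall i, (i < d)%nat -> f i = g i) -> Rprod d f = Rprod d g.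
Proof.
  induction d; simpl; intros H; [reflexivity|].
  rewrite IHd by (intros; apply H; lia). rewrite H by lia. reflexivity.
Qed.

Lemma Rprod_const d c : Rprod d (fun _ => c) = c ^ d.
Proof. induction d; simpl; [reflexivity|]. rewrite IHd; ring. Qed.

(** * Null sets *)

Lemma null_mono d (E F : (nat -> R) -> Prop) :
  (forall x, E x -> F x) -> lebesgue_null d F -> lebesgue_null d E.
Proof.
  intros HEF HF eps He. destruct (HF eps He) as (a & b & H1 & H2 & H3).
  exists a, b. auto.
Qed.

Lemma null_empty d (E : (nat -> R) -> Prop) : (0 < d)%nat -> (forall x, ~ E x) -> lebesgue_null d E.
Proof.
  intros Hd HE eps He. exists (fun _ _ => 0), (fun _ _ => 0). split; [|split].
  - intros; lra.
  - intros y Hy; contradiction (HE y).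
  - intros K. rewrite Rsum_zero; [lra|].
    intros p _. destruct d as [|d]; [lia|]. simpl. ring.
Qed.

(* Boxes of a cover are enumerated along the Cantor pairing [of_nat]; the first [K]
   of them lie in the first [K] boxes of each of the first [K] covers. *)
Lemma Rsum_cantor_le K (h : nat -> nat -> R) : (forall k p, 0 <= h k p) ->
  Rsum K (fun q => h (fst (of_nat q)) (snd (of_nat q))) <= Rsum K (fun k => Rsum K (h k)).
Proof.
  intros Hh.
  assert (Hbound : forall q, (q < K)%nat -> (fst (of_nat q) < K)%nat /\ (snd (of_nat q) < K)%nat).
  { intros q Hq. pose proof (to_nat_non_decreasing (fst (of_nat q)) (snd (of_nat q))) as H.
    rewrite <- surjective_pairing, cancel_to_of in H. lia. }
  assert (Hdiv : forall a b, (b < K)%nat -> ((a * K + b) / K = a)%nat /\ ((a * K + b) mod K = b)%nat).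
  { intros a b Hb. split.
    - rewrite Nat.div_add_l, Nat.div_small by lia. lia.
    - rewrite Nat.add_comm, Nat.Div0.mod_add, Nat.mod_small by lia. reflexivity. }
  set (g := fun j => h (j / K)%nat (j mod K)%nat).
  set (f := fun q => (fst (of_nat q) * K + snd (of_nat q))%nat).
  replace (Rsum K (fun k => Rsum K (h k))) with (Rsum (K * K) g).
  2:{ rewrite Rsum_blocks. apply Rsum_ext. intros k _. apply Rsum_ext. intros p Hp.
      unfold g. destruct (Hdiv k p Hp) as [-> ->]. reflexivity. }
  replace (Rsum K (fun q => h (fst (of_nat q)) (snd (of_nat q)))) with (Rsum K (fun q => g (f q))).
  2:{ apply Rsum_ext. intros q Hq. unfold g, f. destruct (Hbound q Hq) as [_ H2].
      destruct (Hdiv (fst (of_nat q)) (snd (of_nat q)) H2) as [-> ->]. reflexivity. }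
  apply Rsum_reindex_le; [intros; apply Hh | |].
  - intros q Hq. destruct (Hbound q Hq). unfold f. nia.
  - intros q1 q2 H1 H2 Heq. destruct (Hbound q1 H1) as [_ B1], (Hbound q2 H2) as [_ B2].
    unfold f in Heq.
    destruct (Hdiv (fst (of_nat q1)) (snd (of_nat q1)) B1) as [E1 F1].
    destruct (Hdiv (fst (of_nat q2)) (snd (of_nat q2)) B2) as [E2 F2].
    assert (Ea : fst (of_nat q1) = fst (of_nat q2)) by (rewrite <- E1, Heq; exact E2).
    assert (Eb : snd (of_nat q1) = snd (of_nat q2)) by (rewrite <- F1, Heq; exact F2).
    rewrite <- (cancel_to_of q1), <- (cancel_to_of q2),
      (surjective_pairing (of_nat q1)), (surjective_pairing (of_nat q2)), Ea, Eb.
    reflexivity.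
Qed.

Lemma null_union d (E : nat -> (nat -> R) -> Prop) :
  (forall k, lebesgue_null d (E k)) -> lebesgue_null d (fun x => exists k, E k x).
Proof.
  intros HE eps He.
  assert (Hc : forall k, exists ab : (nat -> nat -> R) * (nat -> nat -> R),
    (forall p i, fst ab p i <= snd ab p i) /\
    (forall x, E k x -> exists p, forall i, (i < d)%nat -> fst ab p i <= x i <= snd ab p i) /\
    (forall K, Rsum K (fun p => Rprod d (fun i => snd ab p i - fst ab p i)) <= eps / 2 ^ S k)).
  { intros k. assert (Hpos : 0 < eps / 2 ^ S k) by (apply Rdiv_lt_0_compat; [lra | apply pow_lt; lra]).
    destruct (HE k _ Hpos) as (a & b & H1 & H2 & H3). exists (a, b). auto. }
  destruct (functional_choice _ Hc) as [F HF].
  exists (fun q => fst (F (fst (of_nat q))) (snd (of_nat q))),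
         (fun q => snd (F (fst (of_nat q))) (snd (of_nat q))).
  split; [|split].
  - intros q i. apply (HF _).
  - intros x [k Hk]. destruct (proj1 (proj2 (HF k)) x Hk) as [p Hp].
    exists (to_nat (k, p)). rewrite cancel_of_to. exact Hp.
  - intros K.
    set (h := fun k p => Rprod d (fun i => snd (F k) p i - fst (F k) p i)).
    apply Rle_trans with (Rsum K (fun k => Rsum K (h k))).
    + apply (Rsum_cantor_le K h). intros k p. apply Rprod_nonneg. intros i _.
      pose proof (proj1 (HF k) p i). lra.
    + apply Rle_trans with (Rsum K (fun k => eps / 2 ^ S k)); [| apply Rsum_halves; lra].
      apply Rsum_le. intros k _. apply (HF k).
Qed.

Lemma null_or d (E F : (nat -> R) -> Prop) : lebesgue_null d E -> lebesgue_null d F ->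
  lebesgue_null d (fun x => E x \/ F x).
Proof.
  intros HE HF. apply null_mono with (F := fun x => exists k : nat, (if Nat.eqb k 0 then E else F) x).
  - intros x [H|H]; [exists 0%nat | exists 1%nat]; exact H.
  - apply null_union. intros k. destruct (Nat.eqb k 0); assumption.
Qed.

(* Cover by the products of d-dimensional covers with the intervals [-j, j]
   in the new coordinate. *)
Lemma null_succ_dim d (E : (nat -> R) -> Prop) : lebesgue_null d E -> lebesgue_null (S d) E.
Proof.
  intros HE.
  apply null_mono with (F := fun x => exists j : nat, E x /\ Rabs (x d) <= INR j).
  { intros x Hx. destruct (exists_nat_gt (Rabs (x d))) as (j & _ & Hj). exists j. split; [exact Hx | lra]. }
  apply null_union. intros j eps He.
  set (w := 2 * INR j + 1).
  assert (Hj0 := pos_INR j).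
  assert (Hw : 0 < w) by (unfold w; lra).
  destruct (HE (eps / w) ltac:(apply Rdiv_lt_0_compat; lra)) as (a & b & H1 & H2 & H3).
  exists (fun p i => if Nat.eqb i d then - INR j else a p i),
         (fun p i => if Nat.eqb i d then INR j else b p i).
  split; [|split].
  - intros p i. destruct (Nat.eqb i d); [lra | apply H1].
  - intros x [Hx Hj]. destruct (H2 x Hx) as [p Hp]. exists p. intros i Hi.
    destruct (Nat.eqb_spec i d) as [->|]; [apply Rabs_le_inv, Hj | apply Hp; lia].
  - intros K. simpl. rewrite Nat.eqb_refl.
    rewrite (Rsum_ext K _ (fun p => (2 * INR j) * Rprod d (fun i => b p i - a p i))).
    + rewrite Rsum_scal.
      assert (0 <= Rsum K (fun p => Rprod d (fun i => b p i - a p i))).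
      { apply Rsum_nonneg; intros q _; apply Rprod_nonneg; intros k _; pose proof (H1 q k); lra. }
      specialize (H3 K).
      apply Rle_trans with (w * (eps / w)); [| right; field; lra].
      assert (2 * INR j <= w) by (unfold w; lra).
      apply Rmult_le_compat; lra.
    + intros p _. rewrite Rmult_comm. f_equal; [ring |]. apply Rprod_ext. intros i Hi.
      destruct (Nat.eqb_spec i d); [lia | reflexivity].
Qed.

(** * Real polynomials *)

Inductive PolyR (d : nat) : ((nat -> R) -> R) -> Prop :=
| Pconst c : PolyR d (fun _ => c)
| Pvar i : (i < d)%nat -> PolyR d (fun x => x i)
| Padd f g : PolyR d f -> PolyR d g -> PolyR d (fun x => f x + g x)
| Pmul f g : PolyR d f -> PolyR d g -> PolyR d (fun x => f x * g x).

Lemma PolyR_ext d f g : PolyR d f -> (forall x, f x = g x) -> PolyR d g.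
Proof. intros H E. replace g with f; [exact H|]. apply functional_extensionality, E. Qed.

Lemma PolyR_succ d f : PolyR d f -> PolyR (S d) f.
Proof. induction 1; constructor; auto. Qed.

Lemma PolyR_local d f : PolyR d f -> forall x y, (forall i, (i < d)%nat -> x i = y i) -> f x = f y.
Proof. induction 1; intros x y Hxy; auto; f_equal; auto. Qed.

Lemma PolyR_opp d f : PolyR d f -> PolyR d (fun x => - f x).
Proof.
  intros H. apply PolyR_ext with (fun x => -1 * f x); [constructor; auto; constructor | intros; ring].
Qed.

Lemma PolyR_sub d f g : PolyR d f -> PolyR d g -> PolyR d (fun x => f x - g x).
Proof.
  intros. apply PolyR_ext with (fun x => f x + - g x); [|intros; ring].
  constructor; [|apply PolyR_opp]; assumption.
Qed.

Lemma PolyR_pow d f k : PolyR d f -> PolyR d (fun x => f x ^ k).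
Proof. intros H. induction k; simpl; repeat constructor; auto. Qed.

Lemma PolyR_Rsum d K F : (forall i, (i < K)%nat -> PolyR d (F i)) ->
  PolyR d (fun x => Rsum K (fun i => F i x)).
Proof. induction K; simpl; intros H; constructor; [apply IHK; intros | ]; apply H; lia. Qed.

Definition in_cube (d : nat) (B : R) (x : nat -> R) := forall i, (i < d)%nat -> Rabs (x i) <= B.
Definition dist1 (d : nat) (x y : nat -> R) := Rsum d (fun i => Rabs (x i - y i)).

Lemma dist1_nonneg d x y : 0 <= dist1 d x y.
Proof. apply Rsum_nonneg; intros; apply Rabs_pos. Qed.

Lemma dist1_coord d x y i : (i < d)%nat -> Rabs (x i - y i) <= dist1 d x y.
Proof.
  intros Hi. apply (Rsum_term d (fun i => Rabs (x i - y i))); [intros; apply Rabs_pos | exact Hi].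
Qed.

Lemma dist1_le d x y delta : (forall i, (i < d)%nat -> Rabs (x i - y i) <= delta) ->
  dist1 d x y <= INR d * delta.
Proof. intros H. rewrite <- Rsum_const. apply Rsum_le, H. Qed.

Lemma PolyR_lipschitz d f : PolyR d f -> forall B, exists L M, 0 <= L /\ 0 <= M /\
  (forall x, in_cube d B x -> Rabs (f x) <= M) /\
  (forall x y, in_cube d B x -> in_cube d B y -> Rabs (f x - f y) <= L * dist1 d x y).
Proof.
  induction 1 as [c | i Hi | f g _ IHf _ IHg | f g _ IHf _ IHg]; intros B.
  - exists 0, (Rabs c). repeat split; [lra | apply Rabs_pos | intros; lra |].
    intros x y _ _. rewrite Rminus_diag, Rabs_R0. pose proof (dist1_nonneg d x y). lra.
  - exists 1, (Rabs B). repeat split; [lra | apply Rabs_pos | |].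
    + intros x Hx. apply Rle_trans with B; [apply Hx, Hi | apply RRle_abs].
    + intros x y _ _. pose proof (dist1_coord d x y i Hi). lra.
  - destruct (IHf B) as (L1 & M1 & HL1 & HM1 & Hb1 & Hl1).
    destruct (IHg B) as (L2 & M2 & HL2 & HM2 & Hb2 & Hl2).
    exists (L1 + L2), (M1 + M2). repeat split; [lra | lra | |].
    + intros x Hx. specialize (Hb1 x Hx); specialize (Hb2 x Hx).
      pose proof (Rabs_triang (f x) (g x)). lra.
    + intros x y Hx Hy. specialize (Hl1 x y Hx Hy); specialize (Hl2 x y Hx Hy).
      replace (f x + g x - (f y + g y)) with ((f x - f y) + (g x - g y)) by ring.
      pose proof (Rabs_triang (f x - f y) (g x - g y)). lra.
  - destruct (IHf B) as (L1 & M1 & HL1 & HM1 & Hb1 & Hl1).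
    destruct (IHg B) as (L2 & M2 & HL2 & HM2 & Hb2 & Hl2).
    exists (M1 * L2 + M2 * L1), (M1 * M2). repeat split; [nra | nra | |].
    + intros x Hx. rewrite Rabs_mult.
      apply Rmult_le_compat; auto; apply Rabs_pos.
    + intros x y Hx Hy. specialize (Hl1 x y Hx Hy); specialize (Hl2 x y Hx Hy).
      pose proof (Hb1 x Hx); pose proof (Hb2 y Hy). pose proof (dist1_nonneg d x y).
      replace (f x * g x - f y * g y) with (f x * (g x - g y) + g y * (f x - f y)) by ring.
      eapply Rle_trans; [apply Rabs_triang|]. rewrite !Rabs_mult.
      assert (Rabs (f x) * Rabs (g x - g y) <= M1 * (L2 * dist1 d x y))
        by (apply Rmult_le_compat; auto; apply Rabs_pos).
      assert (Rabs (g y) * Rabs (f x - f y) <= M2 * (L1 * dist1 d x y))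
        by (apply Rmult_le_compat; auto; apply Rabs_pos).
      nra.
Qed.

Definition eval_last (d K : nat) (c : nat -> (nat -> R) -> R) (x : nat -> R) :=
  Rsum K (fun i => c i x * x d ^ i).

Definition coefs_in (d K : nat) (c : nat -> (nat -> R) -> R) :=
  (forall i, PolyR d (c i)) /\ (forall i x, (K <= i)%nat -> c i x = 0).

Definition expands_last (d : nat) (f : (nat -> R) -> R) :=
  exists K c, coefs_in d K c /\ forall x, f x = eval_last d K c x.

Lemma PolyR_eval_last d K c : (forall i, PolyR d (c i)) -> PolyR (S d) (eval_last d K c).
Proof.
  intros H. apply PolyR_Rsum. intros i _. constructor.
  - apply PolyR_succ, H.
  - apply PolyR_pow. constructor. lia.
Qed.

Lemma expands_last_monomial d c k : PolyR d c -> expands_last d (fun x => c x * x d ^ k).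
Proof.
  intros Hc. exists (S k), (fun i => if Nat.eqb i k then c else fun _ => 0). split; [split|].
  - intros i. destruct (Nat.eqb i k); [exact Hc | constructor].
  - intros i x Hi. destruct (Nat.eqb_spec i k); [lia | reflexivity].
  - intros x. unfold eval_last. simpl. rewrite Nat.eqb_refl, Rsum_zero; [ring|].
    intros i Hi. destruct (Nat.eqb_spec i k); [lia | ring].
Qed.

Lemma expands_last_add d f g :
  expands_last d f -> expands_last d g -> expands_last d (fun x => f x + g x).
Proof.
  intros (K1 & c1 & [P1 S1] & E1) (K2 & c2 & [P2 S2] & E2).
  exists (K1 + K2)%nat, (fun i x => c1 i x + c2 i x). split; [split|].
  - intros i. constructor; auto.
  - intros i x Hi. rewrite S1, S2 by lia. ring.
  - intros x. rewrite E1, E2. unfold eval_last.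
    rewrite <- (Rsum_padding (K1 + K2) K1), <- (Rsum_padding (K1 + K2) K2), <- Rsum_add.
    + apply Rsum_ext. intros i _. ring.
    + lia.
    + intros i Hi. rewrite S2 by lia. ring.
    + lia.
    + intros i Hi. rewrite S1 by lia. ring.
Qed.

Inductive SumMonomials (d : nat) : ((nat -> R) -> R) -> Prop :=
| SMterm c k : PolyR d c -> SumMonomials d (fun x => c x * x d ^ k)
| SMadd f g : SumMonomials d f -> SumMonomials d g -> SumMonomials d (fun x => f x + g x).

Lemma SumMonomials_ext d f g : SumMonomials d f -> (forall x, f x = g x) -> SumMonomials d g.
Proof. intros H E. replace g with f; [exact H|]. apply functional_extensionality, E. Qed.

Lemma SumMonomials_mul d f g : SumMonomials d f -> SumMonomials d g -> SumMonomials d (fun x => f x * g x).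
Proof.
  intros Hf. induction Hf as [c k Hc | f1 f2 _ IH1 _ IH2]; intros Hg.
  - induction Hg as [e l He | g1 g2 _ IG1 _ IG2].
    + apply SumMonomials_ext with (fun x => (c x * e x) * x d ^ (k + l));
        [constructor; constructor; auto | intros; rewrite pow_add; ring].
    + apply SumMonomials_ext with (fun x => c x * x d ^ k * g1 x + c x * x d ^ k * g2 x);
        [constructor; auto | intros; ring].
  - apply SumMonomials_ext with (fun x => f1 x * g x + f2 x * g x); [constructor; auto | intros; ring].
Qed.

Lemma PolyR_SumMonomials d f : PolyR (S d) f -> SumMonomials d f.
Proof.
  induction 1 as [c | i Hi | | ].
  - apply SumMonomials_ext with (fun x => c * x d ^ 0); [repeat constructor | intros; simpl; ring].
  - destruct (Nat.eq_dec i d) as [->|Hne].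
    + apply SumMonomials_ext with (fun x => 1 * x d ^ 1); [repeat constructor | intros; simpl; ring].
    + apply SumMonomials_ext with (fun x => x i * x d ^ 0);
        [repeat constructor; lia | intros; simpl; ring].
  - constructor; auto.
  - apply SumMonomials_mul; auto.
Qed.

Lemma PolyR_expands_last d f : PolyR (S d) f -> expands_last d f.
Proof.
  intros H. apply PolyR_SumMonomials in H. induction H as [c k Hc | f g _ IHf _ IHg].
  - apply expands_last_monomial, Hc.
  - apply expands_last_add; assumption.
Qed.

Definition upd (d : nat) (x : nat -> R) (t : R) : nat -> R :=
  fun i => if Nat.eqb i d then t else x i.

Lemma upd_same d x : upd d x (x d) = x.
Proof. apply functional_extensionality. intros i. unfold upd. destruct (Nat.eqb_spec i d); subst; auto. Qed.

Lemma upd_at d x t : upd d x t d = t.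
Proof. unfold upd. rewrite Nat.eqb_refl. reflexivity. Qed.

Lemma upd_other d x t i : i <> d -> upd d x t i = x i.
Proof. intros H. unfold upd. destruct (Nat.eqb_spec i d); [contradiction | reflexivity]. Qed.

Lemma dist1_upd d y t x : dist1 (S d) (upd d y t) x = dist1 d y x + Rabs (t - x d).
Proof.
  unfold dist1. simpl. rewrite upd_at. f_equal. apply Rsum_ext. intros i Hi.
  rewrite upd_other by lia. reflexivity.
Qed.

(* The coefficients of the [j]-th derivative in the last variable. *)
Definition deriv_coefs (j : nat) (c : nat -> (nat -> R) -> R) : nat -> (nat -> R) -> R :=
  fun i y => INR (fact (i + j)) / INR (fact i) * c (i + j)%nat y.

Lemma INR_fact_pos n : 0 < INR (fact n).
Proof. apply lt_0_INR, lt_O_fact. Qed.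

Lemma coefs_in_deriv d K j c : coefs_in d K c -> coefs_in d K (deriv_coefs j c).
Proof.
  intros [HP HS]. split.
  - intros i. repeat constructor. apply HP.
  - intros i y Hi. unfold deriv_coefs. rewrite HS by lia. ring.
Qed.

Lemma derivable_pt_lim_poly K (a : nat -> R) s :
  derivable_pt_lim (fun t => Rsum K (fun i => a i * t ^ i)) s (Rsum K (fun i => a i * (INR i * s ^ pred i))).
Proof.
  induction K; simpl.
  - apply derivable_pt_lim_const.
  - apply (derivable_pt_lim_plus (fun t => Rsum K (fun i => a i * t ^ i)) (fun t => a K * t ^ K)).
    + exact IHK.
    + apply (derivable_pt_lim_scal (fun t => t ^ K)), derivable_pt_lim_pow.
Qed.

Lemma eval_last_upd d K c x t : (forall i, PolyR d (c i)) ->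
  eval_last d K c (upd d x t) = Rsum K (fun i => c i x * t ^ i).
Proof.
  intros HP. unfold eval_last. apply Rsum_ext. intros i _. rewrite upd_at. f_equal.
  apply (PolyR_local d); [apply HP|]. intros k Hk. apply upd_other. lia.
Qed.

Lemma derivable_eval_last d K j c x s : coefs_in d K c ->
  derivable_pt_lim (fun t => eval_last d K (deriv_coefs j c) (upd d x t)) s
    (eval_last d K (deriv_coefs (S j) c) (upd d x s)).
Proof.
  intros Hc. destruct (coefs_in_deriv d K j c Hc) as [HP _].
  destruct (coefs_in_deriv d K (S j) c Hc) as [HP' _].
  replace (fun t => eval_last d K (deriv_coefs j c) (upd d x t))
    with (fun t => Rsum K (fun i => deriv_coefs j c i x * t ^ i))
    by (apply functional_extensionality; intros t; rewrite eval_last_upd; auto).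
  rewrite eval_last_upd by exact HP'.
  replace (Rsum K (fun i => deriv_coefs (S j) c i x * s ^ i))
    with (Rsum K (fun i => deriv_coefs j c i x * (INR i * s ^ pred i))).
  { apply derivable_pt_lim_poly. }
  destruct K as [|K]; [reflexivity|].
  rewrite Rsum_shift, (Rsum_padding (S K) K).
  - simpl (INR 0). rewrite Rmult_0_l, Rmult_0_r, Rplus_0_l. apply Rsum_ext. intros i _.
    unfold deriv_coefs. replace (S i + j)%nat with (i + S j)%nat by lia.
    rewrite fact_simpl, mult_INR, S_INR. simpl pred.
    pose proof (INR_fact_pos i). pose proof (pos_INR i). field. lra.
  - lia.
  - intros i Hi. unfold deriv_coefs. rewrite (proj2 Hc) by lia. ring.
Qed.

Lemma eval_last_deriv0 d K c x : eval_last d K (deriv_coefs 0 c) x = eval_last d K c x.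
Proof.
  apply Rsum_ext. intros i _. unfold deriv_coefs. rewrite Nat.add_0_r.
  pose proof (INR_fact_pos i). field. lra.
Qed.

Lemma eval_last_deriv_top d K k c x : (k < K)%nat -> (forall i y, (k < i)%nat -> c i y = 0) ->
  eval_last d K (deriv_coefs k c) x = INR (fact k) * c k x.
Proof.
  intros Hk H. destruct K as [|K]; [lia|]. unfold eval_last. rewrite Rsum_shift, Rsum_zero.
  - unfold deriv_coefs. simpl. field.
  - intros i _. unfold deriv_coefs. rewrite H by lia. ring.
Qed.

(** * Zero sets of nonzero polynomials are null *)

Lemma MVT_abs_lower (f f' : R -> R) a b c :
  (forall s, derivable_pt_lim f s (f' s)) -> (forall s, a <= s <= b -> c <= Rabs (f' s)) ->
  forall u v, a <= u <= b -> a <= v <= b -> c * Rabs (u - v) <= Rabs (f u - f v).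
Proof.
  intros Hder Hlow.
  assert (Hlt : forall u v, a <= u -> v <= b -> u < v -> c * Rabs (u - v) <= Rabs (f u - f v)).
  { intros u v Hu Hv Huv. destruct (MVT_cor2 f f' u v Huv (fun s _ => Hder s)) as (s & Hs & Hsuv).
    rewrite Rabs_minus_sym, (Rabs_minus_sym (f u)), Hs, Rabs_mult.
    apply Rmult_le_compat_r; [apply Rabs_pos | apply Hlow; lra]. }
  intros u v Hu Hv. destruct (Rtotal_order u v) as [H|[->|H]].
  - apply Hlt; lra.
  - rewrite !Rminus_diag, Rabs_R0, Rmult_0_r. lra.
  - rewrite Rabs_minus_sym, (Rabs_minus_sym (f u)). apply Hlt; lra.
Qed.

Fixpoint enc (M d : nat) (dig : nat -> nat) : nat :=
  match d with O => O | S d' => (dig O + M * enc M d' (fun i => dig (S i)))%nat end.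
Fixpoint digit (M i q : nat) : nat :=
  match i with O => (q mod M)%nat | S i' => digit M i' (q / M)%nat end.

Lemma enc_spec M d : (0 < M)%nat -> forall dig, (forall i, (i < d)%nat -> (dig i < M)%nat) ->
  (enc M d dig < M ^ d)%nat /\ forall i, (i < d)%nat -> digit M i (enc M d dig) = dig i.
Proof.
  intros HM. induction d; intros dig Hd; simpl; [split; lia|].
  destruct (IHd (fun i => dig (S i))) as [H1 H2]; [intros; apply Hd; lia|].
  set (e := enc M d (fun i => dig (S i))) in *.
  assert (H0 : (dig 0 < M)%nat) by (apply Hd; lia).
  split; [nia|]. intros [|i] Hi; simpl.
  - rewrite (Nat.mul_comm M e), Nat.Div0.mod_add. apply Nat.mod_small, H0.
  - rewrite (Nat.mul_comm M e), Nat.div_add, Nat.div_small by lia. apply H2. lia.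
Qed.

Definition in_cell (d M : nat) (B delta : R) (q : nat) (x : nat -> R) :=
  forall i, (i < d)%nat ->
    - B + INR (digit M i q) * delta <= x i <= - B + INR (digit M i q) * delta + delta.

Lemma cube_cells d M B delta x : (0 < M)%nat -> 0 < delta -> INR M * delta = 2 * B ->
  in_cube d B x -> exists q, (q < M ^ d)%nat /\ in_cell d M B delta q x.
Proof.
  intros HM Hd HMd Hx.
  assert (Hdig : forall i, exists k, (i < d)%nat ->
    (k < M)%nat /\ - B + INR k * delta <= x i <= - B + INR k * delta + delta).
  { intros i. destruct (lt_dec i d) as [Hi|Hi]; [|exists 0%nat; lia].
    destruct (grid_index_lt (- B) delta (x i) M Hd HM) as [k Hk].
    - pose proof (Rabs_le_inv _ _ (Hx i Hi)). lra.
    - exists k. intros _. exact Hk. }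
  destruct (functional_choice _ Hdig) as [dig Hdig'].
  destruct (enc_spec M d HM dig) as [Hq Hdq]; [intros; apply Hdig'; assumption|].
  exists (enc M d dig). split; [exact Hq|].
  intros i Hi. rewrite Hdq by exact Hi. apply Hdig', Hi.
Qed.

Lemma Rsum_count K N0 f V : (forall q, (q < N0)%nat -> f q = V) ->
  (forall q, (N0 <= q)%nat -> f q = 0) -> 0 <= V -> Rsum K f <= INR N0 * V.
Proof.
  intros H1 H2 HV.
  destruct (Nat.le_gt_cases K N0) as [HK|HK].
  - rewrite (Rsum_ext K f (fun _ => V)), Rsum_const by (intros; apply H1; lia).
    apply Rmult_le_compat_r, le_INR; assumption.
  - rewrite (Rsum_padding K N0 f), (Rsum_ext N0 f (fun _ => V)), Rsum_const by (auto; lia). lra.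
Qed.

(* A strip [tau <= x d <= tau + eta] over the cube [|x i| <= B] (i < d) thin enough
   that [g'] stays away from zero along each vertical segment: there the zeros of
   [g] form a Lipschitz graph over the first [d] coordinates, hence a null set. *)
Section Strip.
Variables (d : nat) (g g' : (nat -> R) -> R) (B L L' gam tau eta : R).
Hypotheses (HB : 0 < B) (Hgam : 0 < gam) (HL : 0 <= L) (HL'eta : L' * eta <= gam / 2)
  (Htau : - B <= tau) (Htaueta : tau + eta <= B)
  (Hg : forall x y, in_cube (S d) B x -> in_cube (S d) B y ->
          Rabs (g x - g y) <= L * dist1 (S d) x y)
  (Hg' : forall x y, in_cube (S d) B x -> in_cube (S d) B y ->
          Rabs (g' x - g' y) <= L' * dist1 (S d) x y)
  (Hder : forall x s, derivable_pt_lim (fun t => g (upd d x t)) s (g' (upd d x s))).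

Definition strip_zeros (x : nat -> R) :=
  in_cube d B x /\ tau <= x d <= tau + eta /\ g x = 0 /\ gam <= Rabs (g' x).

Lemma in_cube_upd y t : in_cube d B y -> tau <= t <= tau + eta -> in_cube (S d) B (upd d y t).
Proof.
  intros H1 H2 i Hi. destruct (Nat.eq_dec i d) as [->|Hne].
  - rewrite upd_at. apply Rabs_le. lra.
  - rewrite upd_other by exact Hne. apply H1. lia.
Qed.

Lemma in_cube_strip x : in_cube d B x -> tau <= x d <= tau + eta -> in_cube (S d) B x.
Proof. intros H1 H2. rewrite <- (upd_same d x). apply in_cube_upd; assumption. Qed.

Lemma strip_deriv_lower y s : strip_zeros y -> tau <= s <= tau + eta ->
  gam / 2 <= Rabs (g' (upd d y s)).
Proof.
  intros (Hy1 & Hy2 & _ & Hy4) Hs.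
  assert (Hd := Hg' (upd d y s) y (in_cube_upd y s Hy1 Hs) (in_cube_strip y Hy1 Hy2)).
  rewrite dist1_upd in Hd. unfold dist1 in Hd.
  rewrite Rsum_zero, Rplus_0_l in Hd by (intros; rewrite Rminus_diag; apply Rabs_R0).
  assert (L' * Rabs (s - y d) <= gam / 2).
  { destruct (Rle_dec 0 L').
    - apply Rle_trans with (L' * eta); [apply Rmult_le_compat_l; [assumption|] | assumption].
      apply Rabs_le. lra.
    - pose proof (Rabs_pos (s - y d)). nra. }
  pose proof (Rabs_triang_inv (g' y) (g' (upd d y s))). rewrite Rabs_minus_sym in Hd. lra.
Qed.

Lemma strip_zeros_close x y delta : strip_zeros x -> strip_zeros y ->
  (forall i, (i < d)%nat -> Rabs (x i - y i) <= delta) ->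
  Rabs (x d - y d) <= 2 * L * (INR d * delta) / gam.
Proof.
  intros Hx Hy Hdelta. pose proof Hx as (Hx1 & Hx2 & Hx3 & _). pose proof Hy as (Hy1 & Hy2 & Hy3 & _).
  assert (Hz : Rabs (g (upd d y (x d))) <= L * (INR d * delta)).
  { replace (g (upd d y (x d))) with (g (upd d y (x d)) - g x) by (rewrite Hx3; ring).
    eapply Rle_trans; [apply Hg; [apply in_cube_upd | apply in_cube_strip]; assumption|].
    apply Rmult_le_compat_l; [exact HL|]. rewrite dist1_upd, Rminus_diag, Rabs_R0, Rplus_0_r.
    apply dist1_le. intros i Hi. rewrite Rabs_minus_sym. apply Hdelta, Hi. }
  assert (Hmvt := MVT_abs_lower (fun t => g (upd d y t)) (fun t => g' (upd d y t)) tau (tau + eta)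
                    (gam / 2) (Hder y) (fun s Hs => strip_deriv_lower y s Hy Hs) (x d) (y d) Hx2 Hy2).
  simpl in Hmvt. rewrite upd_same, Hy3, Rminus_0_r in Hmvt.
  apply Rmult_le_reg_l with (gam / 2); [lra|].
  replace (gam / 2 * (2 * L * (INR d * delta) / gam)) with (L * (INR d * delta)) by (field; lra).
  eapply Rle_trans; [exact Hmvt | exact Hz].
Qed.

(* Cover by [M^d] boxes: a grid cell of side [delta] in the first [d] coordinates
   times an interval of radius [r] around the last coordinate of a chosen point of
   the set in that cell. *)
Lemma strip_zeros_null : lebesgue_null (S d) strip_zeros.
Proof.
  intros eps He.
  destruct (exists_nat_gt ((2 * B) ^ d * 8 * L * INR d * B / (gam * eps))) as (M & HM & HMbig).
  assert (HMpos : 0 < INR M) by (apply lt_0_INR; lia).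
  set (delta := 2 * B / INR M).
  assert (Hdelta : 0 < delta) by (unfold delta; apply Rdiv_lt_0_compat; lra).
  set (r := 2 * L * (INR d * delta) / gam).
  assert (Hr : 0 <= r).
  { unfold r. pose proof (pos_INR d).
    apply Rmult_le_pos; [apply Rmult_le_pos; [lra | apply Rmult_le_pos; lra] |].
    apply Rlt_le, Rinv_0_lt_compat, Hgam. }
  assert (Hch : forall q, exists y, (exists x, in_cell d M B delta q x /\ strip_zeros x) ->
                                    in_cell d M B delta q y /\ strip_zeros y).
  { intros q. destruct (classic (exists x, in_cell d M B delta q x /\ strip_zeros x)) as [[x Hx]|Hn].
    - exists x. auto.
    - exists (fun _ => 0). intros H; contradiction. }
  destruct (functional_choice _ Hch) as [Y HY].
  set (lo := fun q i => if Nat.ltb i d then - B + INR (digit M i q) * delta else Y q d - r).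
  exists (fun q i => if Nat.ltb q (M ^ d) then lo q i else 0),
         (fun q i => if Nat.ltb q (M ^ d) then lo q i + (if Nat.ltb i d then delta else 2 * r) else 0).
  split; [|split].
  - intros q i. destruct (Nat.ltb q (M ^ d)); [destruct (Nat.ltb i d) |]; lra.
  - intros x Hx.
    destruct (cube_cells d M B delta x HM Hdelta ltac:(unfold delta; field; lra) (proj1 Hx))
      as (q & Hq & Hcell).
    destruct (HY q (ex_intro _ x (conj Hcell Hx))) as [HYc HYs].
    exists q. intros i Hi. unfold lo.
    destruct (Nat.ltb_spec q (M ^ d)); [|lia].
    destruct (Nat.ltb_spec i d); [apply Hcell; assumption|].
    replace i with d by lia.
    assert (Hclose : Rabs (x d - Y q d) <= r).
    { apply strip_zeros_close; [exact Hx | exact HYs |]. intros k Hk.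
      specialize (Hcell k Hk). specialize (HYc k Hk). apply Rabs_le. lra. }
    apply Rabs_le_inv in Hclose. lra.
  - intros K. eapply Rle_trans.
    + apply Rsum_count with (N0 := (M ^ d)%nat) (V := delta ^ d * (2 * r)).
      * intros q Hq. simpl. destruct (Nat.ltb_spec q (M ^ d)); [|lia].
        rewrite (Rprod_ext d _ (fun _ => delta)), Rprod_const.
        -- destruct (Nat.ltb_spec d d); [lia|]. ring.
        -- intros i Hi. destruct (Nat.ltb_spec i d); [ring | lia].
      * intros q Hq. simpl. destruct (Nat.ltb_spec q (M ^ d)); [lia|]. ring.
      * apply Rmult_le_pos; [apply pow_le | ]; lra.
    + rewrite pow_INR.
      replace (INR M ^ d * (delta ^ d * (2 * r))) with ((INR M * delta) ^ d * (2 * r))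
        by (rewrite Rpow_mult_distr; ring).
      replace (INR M * delta) with (2 * B) by (unfold delta; field; lra).
      unfold r, delta.
      replace ((2 * B) ^ d * (2 * (2 * L * (INR d * (2 * B / INR M)) / gam)))
        with ((2 * B) ^ d * 8 * L * INR d * B / (gam * eps) * eps / INR M) by (field; lra).
      apply Rmult_le_reg_r with (INR M); [exact HMpos|].
      unfold Rdiv at 1. rewrite Rmult_assoc, Rinv_l, Rmult_1_r by lra. nra.
Qed.

End Strip.

Lemma stratum_bounded_null d g g' l : PolyR (S d) g -> PolyR (S d) g' ->
  (forall x s, derivable_pt_lim (fun t => g (upd d x t)) s (g' (upd d x s))) ->
  lebesgue_null (S d) (fun x => in_cube (S d) (INR l) x /\ g x = 0 /\ / (INR l + 1) <= Rabs (g' x)).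
Proof.
  intros Pg Pg' Hder.
  set (B := INR l + 1). set (gam := / (INR l + 1)).
  assert (Hl := pos_INR l).
  assert (HB : 0 < B) by (unfold B; lra).
  assert (Hgam : 0 < gam) by (unfold gam; apply Rinv_0_lt_compat; lra).
  destruct (PolyR_lipschitz _ _ Pg B) as (L & _ & HL & _ & _ & Hlg).
  destruct (PolyR_lipschitz _ _ Pg' B) as (L' & _ & HL' & _ & _ & Hlg').
  set (eta := gam / (2 * L' + 1)).
  assert (Heta : 0 < eta) by (unfold eta; apply Rdiv_lt_0_compat; lra).
  assert (HLe : L' * eta <= gam / 2).
  { unfold eta. apply Rmult_le_reg_r with (2 * L' + 1); [lra|].
    replace (L' * (gam / (2 * L' + 1)) * (2 * L' + 1)) with (L' * gam) by (field; lra). nra. }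
  assert (Heta1 : eta <= 1).
  { assert (gam <= 1) by (unfold gam; rewrite <- Rinv_1; apply Rinv_le_contravar; lra).
    unfold eta. apply Rmult_le_reg_r with (2 * L' + 1); [lra|].
    replace (gam / (2 * L' + 1) * (2 * L' + 1)) with gam by (field; lra). lra. }
  apply null_mono with (F := fun x => exists k : nat,
     - INR l + INR k * eta + eta <= B /\ strip_zeros d g g' B gam (- INR l + INR k * eta) eta x).
  { intros x (Hx1 & Hx2 & Hx3).
    assert (Hxd := Rabs_le_inv _ _ (Hx1 d ltac:(lia))).
    destruct (grid_index (- INR l) eta (x d) Heta ltac:(lra)) as [k Hk].
    exists k. split; [unfold B; lra|].
    split; [| split; [lra | split; assumption]].
    intros i Hi. apply Rle_trans with (INR l); [apply Hx1; lia | unfold B; lra]. }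
  apply null_union. intros k.
  destruct (Rle_dec (- INR l + INR k * eta + eta) B) as [Hc|Hc].
  - apply null_mono with (F := strip_zeros d g g' B gam (- INR l + INR k * eta) eta);
      [intros x [_ H]; exact H|].
    apply (strip_zeros_null d g g' B L L'); auto; try lra.
    pose proof (pos_INR k). unfold B. nra.
  - apply null_empty; [lia|]. intros x [H _]. contradiction.
Qed.

Lemma stratum_null d g g' : PolyR (S d) g -> PolyR (S d) g' ->
  (forall x s, derivable_pt_lim (fun t => g (upd d x t)) s (g' (upd d x s))) ->
  lebesgue_null (S d) (fun x => g x = 0 /\ g' x <> 0).
Proof.
  intros Pg Pg' Hder.
  apply null_mono with (F := fun x => exists l : nat,
    in_cube (S d) (INR l) x /\ g x = 0 /\ / (INR l + 1) <= Rabs (g' x)).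
  - intros x [H1 H2].
    assert (Hpos : 0 < Rabs (g' x)) by (apply Rabs_pos_lt, H2).
    destruct (exists_nat_gt (dist1 (S d) x (fun _ => 0) + / Rabs (g' x))) as (l & _ & Hl).
    assert (0 <= dist1 (S d) x (fun _ => 0)) by apply dist1_nonneg.
    assert (0 < / Rabs (g' x)) by (apply Rinv_0_lt_compat, Hpos).
    exists l. split; [|split; [exact H1|]].
    + intros i Hi. pose proof (dist1_coord (S d) x (fun _ => 0) i Hi). rewrite Rminus_0_r in H3. lra.
    + rewrite <- (Rinv_inv (Rabs (g' x))). apply Rlt_le, Rinv_lt_contravar; [nra | lra].
  - apply null_union. intros l. apply stratum_bounded_null; assumption.
Qed.

Lemma exists_top_coef K (c : nat -> (nat -> R) -> R) :
  (exists i x, (i < K)%nat /\ c i x <> 0) ->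
  exists k, (k < K)%nat /\ (exists x, c k x <> 0) /\
    (forall i x, (k < i)%nat -> (i < K)%nat -> c i x = 0).
Proof.
  induction K; intros (i & x & Hi & Hx); [lia|].
  destruct (classic (exists y, c K y <> 0)) as [Hy|Hn].
  - exists K. split; [lia|]. split; [exact Hy | intros; lia].
  - destruct IHK as (k & Hk & Hx' & Hz).
    + exists i, x. split; [|exact Hx]. destruct (Nat.eq_dec i K) as [->|]; [|lia].
      contradiction Hn. exists x. exact Hx.
    + exists k. split; [lia|]. split; [exact Hx'|]. intros i0 x0 H1 H2.
      destruct (Nat.eq_dec i0 K) as [->|]; [|apply Hz; lia].
      apply NNPP. intros Hc. apply Hn. exists x0. exact Hc.
Qed.

Lemma exists_last_true (p : nat -> Prop) k : p 0%nat -> ~ p k -> exists j, (j < k)%nat /\ p j /\ ~ p (S j).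
Proof.
  induction k; intros H0 Hk; [contradiction|].
  destruct (classic (p k)) as [Hp|Hp]; [exists k; auto|].
  destruct (IHk H0 Hp) as (j & Hj & P1 & P2). exists j. auto.
Qed.

(* Expanding [P] in the last variable with top coefficient [c k], a zero of [P]
   either is a zero of [c k], or for some [j < k] a zero of the [j]-th derivative
   in the last variable at which the [(j+1)]-th derivative does not vanish (the
   [k]-th derivative is [k! c k]). *)
Lemma poly_null_succ d :
  (forall c, PolyR d c -> (exists x, c x <> 0) -> lebesgue_null (S d) (fun x => c x = 0)) ->
  forall P, PolyR (S d) P -> (exists x, P x <> 0) -> lebesgue_null (S d) (fun x => P x = 0).
Proof.
  intros IH P HP [x0 Hx0].
  destruct (PolyR_expands_last _ _ HP) as (K & c & Hc & Ec).
  assert (Hex : exists i x, (i < K)%nat /\ c i x <> 0).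
  { apply NNPP; intros Hn; apply Hx0; rewrite Ec. apply Rsum_zero. intros i Hi.
    destruct (Req_dec (c i x0) 0) as [E|E]; [rewrite E; ring | contradiction Hn; eauto]. }
  destruct (exists_top_coef K c Hex) as (k & Hk & [x1 Hx1] & Hz).
  assert (Hz' : forall i y, (k < i)%nat -> c i y = 0).
  { intros i y Hi; destruct (Nat.lt_ge_cases i K); [apply Hz; auto | apply (proj2 Hc); auto]. }
  apply null_mono with (F := fun x => c k x = 0 \/ exists j : nat,
        eval_last d K (deriv_coefs j c) x = 0 /\ eval_last d K (deriv_coefs (S j) c) x <> 0).
  { intros x Hx; destruct (Req_dec (c k x) 0) as [E|E]; [left; exact E | right].
    destruct (exists_last_true (fun j => eval_last d K (deriv_coefs j c) x = 0) k) as (j & _ & H1 & H2).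
    - rewrite eval_last_deriv0, <- Ec. exact Hx.
    - rewrite eval_last_deriv_top by assumption.
      apply Rmult_integral_contrapositive. split; [apply Rgt_not_eq, INR_fact_pos | exact E].
    - exists j. auto. }
  apply null_or.
  - apply IH; [apply (proj1 Hc) | exists x1; exact Hx1].
  - apply null_union; intros j. apply stratum_null.
    + apply PolyR_eval_last, (coefs_in_deriv d K j c Hc).
    + apply PolyR_eval_last, (coefs_in_deriv d K (S j) c Hc).
    + intros; apply derivable_eval_last, Hc.
Qed.

Theorem poly_zeros_null d P : PolyR (S d) P -> (exists x, P x <> 0) ->
  lebesgue_null (S d) (fun x => P x = 0).
Proof.
  revert P. induction d as [|d IH]; apply poly_null_succ.
  - intros c Hc [x1 Hx1]. apply null_empty; [lia|]. intros x Hx. apply Hx1.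
    rewrite (PolyR_local 0 c Hc x1 x); [exact Hx | intros; lia].
  - intros c Hc Hx. apply null_succ_dim, IH; assumption.
Qed.

(** * A point where the matrix has full column rank *)

Definition kron (i j : nat) : R := if Nat.eqb i j then 1 else 0.
Definition indic (b : bool) : R := if b then 1 else 0.

Lemma kron_eq i : kron i i = 1.
Proof. unfold kron. rewrite Nat.eqb_refl. reflexivity. Qed.

Lemma kron_ne i j : i <> j -> kron i j = 0.
Proof. intros H. unfold kron. destruct (Nat.eqb_spec i j); [contradiction | reflexivity]. Qed.

Lemma Rsum_kron m p f : (p < m)%nat -> Rsum m (fun i => kron i p * f i) = f p.
Proof.
  intros Hp. replace m with (p + S (m - S p))%nat by lia.
  rewrite Rsum_split, Rsum_shift, Rsum_zero, Rsum_zero, Nat.add_0_r, kron_eq.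
  - ring.
  - intros i _. rewrite kron_ne by lia. ring.
  - intros i Hi. rewrite kron_ne by lia. ring.
Qed.

Lemma Rsum_two N p a b F : (0 < p < N)%nat ->
  Rsum N (fun j => (if Nat.eqb j 0 then a else if Nat.eqb j p then b else 0) * F j) = a * F 0%nat + b * F p.
Proof.
  intros Hp.
  rewrite (Rsum_ext N _ (fun j => a * (kron j 0 * F j) + b * (kron j p * F j))).
  - rewrite Rsum_add, !Rsum_scal, !Rsum_kron by lia. reflexivity.
  - intros j _. unfold kron. destruct (Nat.eqb_spec j 0), (Nat.eqb_spec j p); subst; try lia; ring.
Qed.

Lemma Rsum_columns m N h : Rsum (m * N) h = Rsum N (fun j => Rsum m (fun i => h (i + m * j)%nat)).
Proof.
  rewrite Nat.mul_comm, Rsum_blocks. apply Rsum_ext. intros j _. apply Rsum_ext. intros i _.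
  f_equal. lia.
Qed.

Lemma Rsum_indic_between K N : Rsum K (fun i => indic (Nat.ltb 0 i && Nat.ltb i N)) = INR (Nat.min K N - 1).
Proof.
  induction K; [reflexivity|].
  change (Rsum (S K) ?f) with (Rsum K f + f K). rewrite IHK.
  unfold indic. destruct (Nat.ltb_spec 0 K), (Nat.ltb_spec K N); simpl andb.
  - replace (Nat.min (S K) N - 1)%nat with (S (Nat.min K N - 1)) by lia. rewrite S_INR. ring.
  - replace (Nat.min (S K) N - 1)%nat with (Nat.min K N - 1)%nat by lia. ring.
  - replace (Nat.min (S K) N - 1)%nat with (Nat.min K N - 1)%nat by lia. ring.
  - replace (Nat.min (S K) N - 1)%nat with (Nat.min K N - 1)%nat by lia. ring.
Qed.

Lemma div_mod_inj a b q : (a / q = b / q)%nat -> (a mod q = b mod q)%nat -> a = b.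
Proof. intros Hd Hm. rewrite (Nat.div_mod_eq a q), (Nat.div_mod_eq b q), Hd, Hm. reflexivity. Qed.

Section Witness.
Variables (n m N : nat).

Definition A_wit (k i : nat) : R :=
  if Nat.eqb k 0 then kron i 0
  else if Nat.ltb k N then kron i 0 + kron i k
  else if Nat.eqb k N then kron i 0 + 2 * indic (Nat.ltb 0 i && Nat.ltb i N)
  else if Nat.leb k m then kron i 0 + kron i (1 + (k - 1 - N) mod (N - 1)) + kron i (k - 1)
  else kron i 0 + indic (Nat.leb N i && Nat.eqb ((i - N) / (N - 1)) (k - m - 1)).

(* [bigM] at [X0 = kron], [A = A_wit] (real entries) *)
Definition M_wit (row c : nat) : R :=
  if Nat.eqb row 0 then kron (c mod m) (c / m)
  else (if Nat.eqb (c / m) 0 then - A_wit ((row - 1) / (N - 1)) (S ((row - 1) mod (N - 1)))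
        else if Nat.eqb (c / m) (S ((row - 1) mod (N - 1))) then A_wit ((row - 1) / (N - 1)) 0
        else 0)
       * A_wit ((row - 1) / (N - 1)) (c mod m).

Section Kernel.
Hypotheses (Hm : (0 < m)%nat) (HN2 : (2 <= N)%nat) (HNm : (N <= m)%nat) (Hmn : (m < n)%nat)
  (Hcount : (m - N <= (N - 1) * (n - m - 1))%nat).

Variable u : nat -> R.
Hypothesis Hu : forall row, (row < 1 + n * (N - 1))%nat -> Rsum (m * N) (fun c => M_wit row c * u c) = 0.

Definition V (i j : nat) := u (i + m * j)%nat.
Definition AV (k j : nat) := Rsum m (fun i => A_wit k i * V i j).

Lemma index_div_mod i j : (i < m)%nat -> ((i + m * j) / m = j)%nat /\ ((i + m * j) mod m = i)%nat.
Proof.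
  intros Hi. split.
  - rewrite Nat.mul_comm, Nat.div_add, Nat.div_small by lia. reflexivity.
  - rewrite Nat.mul_comm, Nat.Div0.mod_add, Nat.mod_small by lia. reflexivity.
Qed.

Lemma kernel_eq_trace : Rsum N (fun j => V j j) = 0.
Proof.
  rewrite <- (Hu 0%nat (Nat.lt_0_succ _)), Rsum_columns. apply Rsum_ext. intros j Hj.
  rewrite <- (Rsum_kron m j (fun i => V i j)) by lia. apply Rsum_ext. intros i Hi.
  unfold M_wit. simpl. destruct (index_div_mod i j Hi) as [-> ->]. reflexivity.
Qed.

Lemma kernel_eq_D k r : (k < n)%nat -> (r < N - 1)%nat ->
  - A_wit k (S r) * AV k 0 + A_wit k 0 * AV k (S r) = 0.
Proof.
  intros Hk Hr. set (row := (1 + k * (N - 1) + r)%nat).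
  assert (Hrow : (row < 1 + n * (N - 1))%nat).
  { assert (((k + 1) * (N - 1) <= n * (N - 1))%nat) by (apply Nat.mul_le_mono_r; lia).
    unfold row. nia. }
  assert (Hrow1 : (row - 1 = r + k * (N - 1))%nat) by (unfold row; generalize (k * (N - 1))%nat; lia).
  assert (E1 : ((row - 1) / (N - 1) = k)%nat)
    by (rewrite Hrow1, Nat.div_add, Nat.div_small by lia; reflexivity).
  assert (E2 : ((row - 1) mod (N - 1) = r)%nat)
    by (rewrite Hrow1, Nat.Div0.mod_add; apply Nat.mod_small; lia).
  rewrite <- (Hu row Hrow), Rsum_columns. unfold AV.
  rewrite <- (Rsum_two N (S r) (- A_wit k (S r)) (A_wit k 0)
               (fun j => Rsum m (fun i => A_wit k i * V i j))) by lia.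
  apply Rsum_ext. intros j Hj. rewrite <- Rsum_scal. apply Rsum_ext. intros i Hi.
  unfold M_wit. destruct (Nat.eqb_spec row 0) as [E|_]; [unfold row in E; simpl in E; discriminate|].
  rewrite E1, E2. destruct (index_div_mod i j Hi) as [-> ->]. unfold V. ring.
Qed.

Lemma AV_unit_sum k p q : (p < m)%nat -> (q < m)%nat ->
  (forall i, A_wit k i = kron i p + kron i q) -> forall j, AV k j = V p j + V q j.
Proof.
  intros Hp Hq HA j. unfold AV.
  rewrite (Rsum_ext m _ (fun i => kron i p * V i j + kron i q * V i j)).
  - rewrite Rsum_add, !Rsum_kron by assumption. reflexivity.
  - intros i _. rewrite HA. ring.
Qed.

Lemma V_row0 j : (1 <= j < N)%nat -> V 0 j = 0.
Proof.
  intros Hj. pose proof (kernel_eq_D 0 (j - 1) ltac:(lia) ltac:(lia)) as E.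
  replace (S (j - 1)) with j in E by lia.
  unfold AV, A_wit in E. simpl in E. rewrite !Rsum_kron, kron_ne, kron_eq in E by lia. lra.
Qed.

Lemma V_top k j : (1 <= j < N)%nat -> (1 <= k < N)%nat -> V k j = kron j k * (V 0 0 + V k 0).
Proof.
  intros Hj Hk. pose proof (kernel_eq_D k (j - 1) ltac:(lia) ltac:(lia)) as E.
  replace (S (j - 1)) with j in E by lia.
  assert (HA : forall i, A_wit k i = kron i 0 + kron i k).
  { intros i. unfold A_wit. destruct (Nat.eqb_spec k 0); [lia|].
    destruct (Nat.ltb_spec k N); [reflexivity | lia]. }
  rewrite !(AV_unit_sum k 0 k ltac:(lia) ltac:(lia) HA), !HA, (V_row0 j) in E by lia.
  rewrite kron_ne, (kron_ne 0 k), kron_eq in E by lia.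
  lra.
Qed.

Lemma V_col0_top j : (1 <= j < N)%nat -> V j 0 = 0.
Proof.
  set (top := fun i => indic (Nat.ltb 0 i && Nat.ltb i N)).
  assert (HA : forall i, A_wit N i = kron i 0 + 2 * top i).
  { intros i. unfold A_wit. destruct (Nat.eqb_spec N 0); [lia|].
    destruct (Nat.ltb_spec N N); [lia|]. rewrite Nat.eqb_refl. reflexivity. }
  set (T := fun j' => Rsum m (fun i => top i * V i j')).
  assert (HS : forall j', AV N j' = V 0 j' + 2 * T j').
  { intros j'. unfold AV, T. rewrite (Rsum_ext m _ (fun i => kron i 0 * V i j' + 2 * (top i * V i j'))).
    - rewrite Rsum_add, Rsum_scal, Rsum_kron by lia. reflexivity.
    - intros i _. rewrite HA. ring. }
  assert (HT : forall j', (1 <= j' < N)%nat -> T j' = V 0 0 + V j' 0).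
  { intros j' Hj'. unfold T. rewrite <- (Rsum_kron m j' (fun _ => V 0 0 + V j' 0)) by lia.
    apply Rsum_ext. intros i Hi. unfold top, indic.
    destruct (Nat.ltb_spec 0 i), (Nat.ltb_spec i N); simpl andb; try (rewrite kron_ne by lia; ring).
    rewrite V_top by lia. unfold kron.
    destruct (Nat.eqb_spec j' i), (Nat.eqb_spec i j'); subst; try lia; ring. }
  assert (Hcol0 : forall j', (1 <= j' < N)%nat -> V j' 0 = 2 * T 0%nat).
  { intros j' Hj'. pose proof (kernel_eq_D N (j' - 1) ltac:(lia) ltac:(lia)) as E.
    replace (S (j' - 1)) with j' in E by lia.
    rewrite !HS, !HA, (HT j'), (V_row0 j'), kron_ne, kron_eq in E by lia.
    unfold top, indic in E. destruct (Nat.ltb_spec 0 j'), (Nat.ltb_spec j' N); try lia.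
    simpl andb in E. lra. }
  (* Summing [V j' 0 = 2 T 0] over [0 < j' < N] gives [T 0 = 2 (N - 1) T 0]. *)
  assert (HT0 : T 0%nat = 2 * T 0%nat * INR (N - 1)).
  { unfold T at 1. rewrite (Rsum_ext m _ (fun i => 2 * T 0%nat * top i)).
    - unfold top. rewrite Rsum_scal, Rsum_indic_between. do 3 f_equal. lia.
    - intros i Hi. unfold top, indic. destruct (Nat.ltb_spec 0 i), (Nat.ltb_spec i N); simpl; try ring.
      rewrite Hcol0 by lia. ring. }
  assert (1 <= INR (N - 1)) by (apply (le_INR 1); lia).
  assert (T 0%nat = 0) by nra.
  intros Hj. rewrite Hcol0 by exact Hj. lra.
Qed.

Lemma V_top_scalar k j : (1 <= j < N)%nat -> (1 <= k < N)%nat -> V k j = kron j k * V 0 0.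
Proof. intros. rewrite V_top, (V_col0_top k) by assumption. ring. Qed.

Lemma V_low t j : (N <= t < m)%nat -> (1 <= j < N)%nat ->
  V t j = kron j (1 + (t - N) mod (N - 1)) * V t 0.
Proof.
  intros Ht Hj. set (p := (1 + (t - N) mod (N - 1))%nat).
  assert (Hp : (1 <= p < N)%nat) by (unfold p; pose proof (Nat.mod_upper_bound (t - N) (N - 1)); lia).
  assert (HA : forall i, A_wit (S t) i = kron i 0 + kron i p + kron i t).
  { intros i. unfold A_wit. destruct (Nat.eqb_spec (S t) 0); [lia|].
    destruct (Nat.ltb_spec (S t) N); [lia|]. destruct (Nat.eqb_spec (S t) N); [lia|].
    destruct (Nat.leb_spec (S t) m); [|lia].
    replace (S t - 1 - N)%nat with (t - N)%nat by lia. replace (S t - 1)%nat with t by lia.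
    reflexivity. }
  assert (HS : forall j', AV (S t) j' = V 0 j' + V p j' + V t j').
  { intros j'. unfold AV.
    rewrite (Rsum_ext m _ (fun i => kron i 0 * V i j' + kron i p * V i j' + kron i t * V i j')).
    - rewrite !Rsum_add, !Rsum_kron by lia. reflexivity.
    - intros i _. rewrite HA. ring. }
  pose proof (kernel_eq_D (S t) (j - 1) ltac:(lia) ltac:(lia)) as E.
  replace (S (j - 1)) with j in E by lia.
  rewrite !HS, !HA, (V_row0 j), (V_top_scalar p j), (V_col0_top p) in E by lia.
  rewrite (kron_ne j 0), (kron_ne j t), (kron_ne 0 p), (kron_ne 0 t), kron_eq in E by lia.
  fold p. lra.
Qed.

Lemma V_low_col0 t : (N <= t < m)%nat -> V t 0 = 0.
Proof.
  intros Ht. set (b := ((t - N) / (N - 1))%nat). set (p := (1 + (t - N) mod (N - 1))%nat).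
  assert (Hp : (1 <= p < N)%nat) by (unfold p; pose proof (Nat.mod_upper_bound (t - N) (N - 1)); lia).
  assert (Hb : (b < n - m - 1)%nat) by (unfold b; apply Nat.Div0.div_lt_upper_bound; lia).
  set (k := (m + 1 + b)%nat).
  set (block := fun i => (Nat.leb N i && Nat.eqb ((i - N) / (N - 1)) b)%bool).
  assert (HA : forall i, A_wit k i = kron i 0 + indic (block i)).
  { intros i. unfold A_wit. destruct (Nat.eqb_spec k 0); [unfold k in *; lia|].
    destruct (Nat.ltb_spec k N); [unfold k in *; lia|]. destruct (Nat.eqb_spec k N); [unfold k in *; lia|].
    destruct (Nat.leb_spec k m); [unfold k in *; lia|].
    unfold block. replace (k - m - 1)%nat with b by (unfold k; lia). reflexivity. }
  assert (Hblock : forall i, (i < N)%nat -> block i = false).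
  { intros i Hi. unfold block. destruct (Nat.leb_spec N i); [lia | reflexivity]. }
  assert (HS : AV k p = V t 0).
  { unfold AV. rewrite <- (Rsum_kron m t (fun _ => V t 0)) by lia. apply Rsum_ext. intros i Hi.
    rewrite HA. destruct (Nat.lt_ge_cases i N).
    - rewrite (Hblock i), (kron_ne i t) by lia. unfold indic.
      destruct (Nat.eq_dec i 0) as [->|]; [rewrite (V_row0 p) by lia | rewrite kron_ne by lia]; ring.
    - rewrite (kron_ne i 0), (V_low i p) by lia. unfold indic.
      destruct (Nat.eq_dec i t) as [->|Hit].
      + assert (Hbt : block t = true) by (unfold block, b; apply andb_true_intro; split;
          [apply Nat.leb_le; lia | apply Nat.eqb_refl]).
        rewrite Hbt, !kron_eq. ring.
      + rewrite (kron_ne i t) by exact Hit. destruct (block i) eqn:Hbi; [|ring].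
        rewrite kron_ne; [ring|]. intros Hip. apply Hit.
        enough ((i - N) = (t - N))%nat by lia. apply (div_mod_inj _ _ (N - 1)); [|unfold p in Hip; lia].
        unfold block in Hbi. apply andb_prop in Hbi as [_ Hbi]. apply Nat.eqb_eq in Hbi. exact Hbi. }
  pose proof (kernel_eq_D k (p - 1) ltac:(unfold k; lia) ltac:(lia)) as E.
  replace (S (p - 1)) with p in E by lia.
  rewrite !HA, (Hblock p), (Hblock 0%nat), (kron_ne p 0), kron_eq, HS in E by lia.
  unfold indic in E. lra.
Qed.

Lemma V00_zero : V 0 0 = 0.
Proof.
  pose proof kernel_eq_trace as E.
  rewrite (Rsum_ext N _ (fun _ => V 0 0)), Rsum_const in E.
  - assert (0 < INR N) by (apply lt_0_INR; lia). nra.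
  - intros j Hj. destruct (Nat.eq_dec j 0) as [->|]; [reflexivity|].
    rewrite V_top_scalar, kron_eq by lia. ring.
Qed.

Lemma kernel_trivial c : (c < m * N)%nat -> u c = 0.
Proof.
  intros Hc. assert (Hi : (c mod m < m)%nat) by (apply Nat.mod_upper_bound; lia).
  assert (Hj : (c / m < N)%nat) by (apply Nat.Div0.div_lt_upper_bound; lia).
  replace c with (c mod m + m * (c / m))%nat by (rewrite (Nat.div_mod_eq c m) at 3; lia).
  fold (V (c mod m) (c / m)). set (i := (c mod m)%nat) in *. set (j := (c / m)%nat) in *.
  pose proof V00_zero as H00.
  destruct (Nat.lt_ge_cases i N) as [HiN|HiN].
  - destruct (Nat.eq_dec i 0) as [->|Hi0]; destruct (Nat.eq_dec j 0) as [->|Hj0].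
    + assumption.
    + apply V_row0. lia.
    + apply V_col0_top. lia.
    + rewrite V_top_scalar, H00 by lia. ring.
  - destruct (Nat.eq_dec j 0) as [->|Hj0]; [apply V_low_col0; lia|].
    rewrite V_low, V_low_col0 by lia. ring.
Qed.

End Kernel.
End Witness.

Lemma M_wit_kernel_trivial n m N : (0 < m)%nat -> (0 < N)%nat -> (m < n)%nat ->
  (n - 1 <= N * (n - m))%nat -> (N <= m)%nat ->
  forall u, (forall row, (row < 1 + n * (N - 1))%nat ->
              Rsum (m * N) (fun c => M_wit m N row c * u c) = 0) ->
  forall c, (c < m * N)%nat -> u c = 0.
Proof.
  intros Hm HN Hmn Hcount HNm u Hu c Hc.
  destruct (Nat.eq_dec N 1) as [->|HN1].
  - assert (m = 1)%nat by lia. subst m. replace c with 0%nat by lia.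
    specialize (Hu 0%nat ltac:(lia)). simpl in Hu. unfold M_wit, kron in Hu. simpl in Hu. lra.
  - apply (kernel_trivial n m N); try assumption; [lia|].
    replace (N * (n - m))%nat with ((N - 1) * (n - m - 1) + (N - 1) + (n - m))%nat in Hcount.
    + lia.
    + replace N with (S (N - 1)) at 3 by lia. replace (n - m)%nat with (S (n - m - 1)) at 1 by lia.
      simpl. nia.
Qed.

Lemma Csum_ext K f g : (forall i, (i < K)%nat -> f i = g i) -> Csum K f = Csum K g.
Proof.
  induction K; simpl; intros H; [reflexivity|].
  rewrite IHK by (intros; apply H; lia). rewrite H by lia. reflexivity.
Qed.

Lemma fst_Csum K f : fst (Csum K f) = Rsum K (fun i => fst (f i)).
Proof. induction K; simpl; [reflexivity|]. rewrite IHK. reflexivity. Qed.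

Lemma snd_Csum K f : snd (Csum K f) = Rsum K (fun i => snd (f i)).
Proof. induction K; simpl; [reflexivity|]. rewrite IHK. reflexivity. Qed.

Lemma full_column_rank_ext nr nc (M M' : cmat) :
  (forall r c, (r < nr)%nat -> (c < nc)%nat -> M r c = M' r c) ->
  full_column_rank nr nc M' -> full_column_rank nr nc M.
Proof.
  intros H HM v Hv. apply HM. intros row Hrow. rewrite <- (Hv row Hrow).
  apply Csum_ext. intros c Hc. rewrite H; auto.
Qed.

Lemma full_column_rank_real nr nc (M : nat -> nat -> R) :
  (forall u, (forall r, (r < nr)%nat -> Rsum nc (fun c => M r c * u c) = 0) ->
     forall c, (c < nc)%nat -> u c = 0) ->
  full_column_rank nr nc (fun r c => (M r c, 0)).
Proof.
  intros HM v Hv c Hc. rewrite (surjective_pairing (v c)). unfold C0. f_equal.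
  - apply (HM (fun c => fst (v c))); [|exact Hc]. intros r Hr.
    transitivity (fst (Csum nc (fun c => Cmul (M r c, 0) (v c)))); [| rewrite (Hv r Hr); reflexivity].
    rewrite fst_Csum. apply Rsum_ext. intros. simpl. ring.
  - apply (HM (fun c => snd (v c))); [|exact Hc]. intros r Hr.
    transitivity (snd (Csum nc (fun c => Cmul (M r c, 0) (v c)))); [| rewrite (Hv r Hr); reflexivity].
    rewrite snd_Csum. apply Rsum_ext. intros. simpl. ring.
Qed.

Lemma bigM_wit n m N (X A : cmat) r c :
  (0 < m)%nat -> (N <= m)%nat ->
  (forall i j, (i < m)%nat -> (j < N)%nat -> X i j = (kron i j, 0)) ->
  (forall k i, (k < n)%nat -> (i < m)%nat -> A k i = (A_wit m N k i, 0)) ->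
  (r < 1 + n * (N - 1))%nat -> (c < m * N)%nat ->
  bigM n m N X A r c = (M_wit m N r c, 0).
Proof.
  intros Hm HNm HX HA Hr Hc. unfold bigM, M_wit.
  assert (Hcm : (c mod m < m)%nat) by (apply Nat.mod_upper_bound; lia).
  assert (HcN : (c / m < N)%nat) by (apply Nat.Div0.div_lt_upper_bound; lia).
  destruct (Nat.eqb_spec r 0).
  - rewrite HX by assumption. unfold Cconj. simpl. f_equal. ring.
  - assert (Hk : ((r - 1) / (N - 1) < n)%nat) by (apply Nat.Div0.div_lt_upper_bound; nia).
    assert (HN : (2 <= N)%nat) by (destruct N as [|[|N']]; nia).
    assert (Hr' : ((r - 1) mod (N - 1) < N - 1)%nat) by (apply Nat.mod_upper_bound; lia).
    set (k := ((r - 1) / (N - 1))%nat) in *.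
    assert (Hrc : forall j, (j < N)%nat -> rowcol m (fun i => A k i) X j = (A_wit m N k j, 0)).
    { intros j Hj. unfold rowcol. rewrite (surjective_pairing (Csum _ _)), fst_Csum, snd_Csum.
      rewrite <- (Rsum_kron m j (fun i => A_wit m N k i)) by lia. f_equal.
      - apply Rsum_ext. intros i Hi. rewrite HX, HA by lia. simpl. ring.
      - apply Rsum_zero. intros i Hi. rewrite HX, HA by lia. simpl. ring. }
    unfold Dmat, Bmat. rewrite HA by assumption.
    destruct (Nat.eqb_spec (c / m) 0); [|destruct (Nat.eqb_spec (c / m) (S ((r - 1) mod (N - 1))))].
    + rewrite Hrc by lia. unfold Cmul, Copp. simpl. f_equal; ring.
    + rewrite Hrc by lia. unfold Cmul. simpl. f_equal; ring.
    + unfold Cmul, C0. simpl. f_equal; ring.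
Qed.

(* Real and imaginary parts sit at the even and odd coordinates, see [decX], [decA]. *)
Definition witness_point (n m N : nat) (p : nat) : R :=
  if Nat.ltb p (2 * (m * N)) then
    if Nat.even p then kron ((p / 2) mod m) ((p / 2) / m) else 0
  else let q := (p - 2 * (m * N))%nat in
    if Nat.even q then A_wit m N ((q / 2) mod n) ((q / 2) / n) else 0.

Lemma even_double_div a : Nat.even (2 * a) = true /\ Nat.even (2 * a + 1) = false /\ (2 * a / 2 = a)%nat.
Proof.
  rewrite Nat.even_add, Nat.even_mul, Nat.mul_comm, Nat.div_mul by lia. auto.
Qed.

Lemma index_mod_div a b i : (i < a)%nat -> ((i + a * b) mod a = i)%nat /\ ((i + a * b) / a = b)%nat.
Proof.
  intros Hi. split.
  - rewrite Nat.mul_comm, Nat.Div0.mod_add, Nat.mod_small by lia. reflexivity.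
  - rewrite Nat.mul_comm, Nat.div_add, Nat.div_small by lia. reflexivity.
Qed.

Lemma decX_witness n m N i j : (i < m)%nat -> (j < N)%nat ->
  decX m (witness_point n m N) i j = (kron i j, 0).
Proof.
  intros Hi Hj. unfold decX, witness_point.
  destruct (even_double_div (i + m * j)) as (E1 & E2 & E3).
  destruct (index_mod_div m j i Hi) as [E4 E5].
  destruct (Nat.ltb_spec (2 * (i + m * j)) (2 * (m * N))); [|nia].
  destruct (Nat.ltb_spec (2 * (i + m * j) + 1) (2 * (m * N))); [|nia].
  rewrite E1, E2, E3, E4, E5. reflexivity.
Qed.

Lemma decA_witness n m N k i : (k < n)%nat -> (i < m)%nat ->
  decA n m N (witness_point n m N) k i = (A_wit m N k i, 0).
Proof.
  intros Hk Hi. unfold decA, witness_point.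
  destruct (even_double_div (k + n * i)) as (E1 & E2 & E3).
  destruct (index_mod_div n i k Hk) as [E4 E5].
  destruct (Nat.ltb_spec (2 * (m * N) + 2 * (k + n * i)) (2 * (m * N))); [lia|].
  destruct (Nat.ltb_spec (2 * (m * N) + 2 * (k + n * i) + 1) (2 * (m * N))); [lia|].
  replace (2 * (m * N) + 2 * (k + n * i) - 2 * (m * N))%nat with (2 * (k + n * i))%nat by lia.
  replace (2 * (m * N) + 2 * (k + n * i) + 1 - 2 * (m * N))%nat with (2 * (k + n * i) + 1)%nat by lia.
  rewrite E1, E2, E3, E4, E5. reflexivity.
Qed.

Lemma witness_full_column_rank n m N : (0 < m)%nat -> (0 < N)%nat -> (m < n)%nat ->
  (n - 1 <= N * (n - m))%nat -> (N <= m)%nat ->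
  full_column_rank (1 + n * (N - 1)) (m * N)
    (bigM n m N (decX m (witness_point n m N)) (decA n m N (witness_point n m N))).
Proof.
  intros Hm HN Hmn Hcount HNm.
  apply full_column_rank_ext with (M' := fun r c => (M_wit m N r c, 0)).
  - intros r c Hr Hc. apply bigM_wit; try assumption.
    + intros; apply decX_witness; assumption.
    + intros; apply decA_witness; assumption.
  - apply full_column_rank_real, (M_wit_kernel_trivial n m N); assumption.
Qed.

(** * Full column rank as nonvanishing of a polynomial *)

Definition CPoly d (f : (nat -> R) -> C) :=
  PolyR d (fun x => fst (f x)) /\ PolyR d (fun x => snd (f x)).

Lemma CPoly_const d z : CPoly d (fun _ => z).
Proof. split; constructor. Qed.

Lemma CPoly_add d f g : CPoly d f -> CPoly d g -> CPoly d (fun x => Cadd (f x) (g x)).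
Proof. intros [F1 F2] [G1 G2]; split; simpl; constructor; assumption. Qed.

Lemma CPoly_mul d f g : CPoly d f -> CPoly d g -> CPoly d (fun x => Cmul (f x) (g x)).
Proof. intros [F1 F2] [G1 G2]; split; simpl; [apply PolyR_sub|]; repeat constructor; assumption. Qed.

Lemma CPoly_opp d f : CPoly d f -> CPoly d (fun x => Copp (f x)).
Proof. intros [F1 F2]; split; simpl; apply PolyR_opp; assumption. Qed.

Lemma CPoly_conj d f : CPoly d f -> CPoly d (fun x => Cconj (f x)).
Proof. intros [F1 F2]; split; simpl; [| apply PolyR_opp]; assumption. Qed.

Lemma CPoly_Csum d K F : (forall i, (i < K)%nat -> CPoly d (F i)) ->
  CPoly d (fun x => Csum K (fun i => F i x)).
Proof.
  induction K; intros H; simpl; [apply CPoly_const|].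
  apply CPoly_add; [apply IHK; intros |]; apply H; lia.
Qed.

Lemma CPoly_bigM n m N r c : (0 < m)%nat -> (r < 1 + n * (N - 1))%nat -> (c < m * N)%nat ->
  CPoly (2 * (m * N) + 2 * (n * m)) (fun x => bigM n m N (decX m x) (decA n m N x) r c).
Proof.
  intros Hm Hr Hc.
  assert (HX : forall i j, (i < m)%nat -> (j < N)%nat ->
            CPoly (2 * (m * N) + 2 * (n * m)) (fun x => decX m x i j))
    by (intros; split; simpl; constructor; nia).
  assert (HA : forall k i, (k < n)%nat -> (i < m)%nat ->
            CPoly (2 * (m * N) + 2 * (n * m)) (fun x => decA n m N x k i))
    by (intros; split; simpl; constructor; nia).
  assert (Hcm : (c mod m < m)%nat) by (apply Nat.mod_upper_bound; lia).
  assert (HcN : (c / m < N)%nat) by (apply Nat.Div0.div_lt_upper_bound; lia).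
  unfold bigM. destruct (Nat.eqb_spec r 0); [apply CPoly_conj, HX; assumption|].
  assert (Hk : ((r - 1) / (N - 1) < n)%nat) by (apply Nat.Div0.div_lt_upper_bound; nia).
  assert (Hr' : ((r - 1) mod (N - 1) < N - 1)%nat) by (apply Nat.mod_upper_bound; lia).
  assert (Hrowcol : forall j, (j < N)%nat -> CPoly (2 * (m * N) + 2 * (n * m))
            (fun x => rowcol m (fun i => decA n m N x ((r - 1) / (N - 1))%nat i) (decX m x) j)).
  { intros j Hj. apply CPoly_Csum. intros i Hi. apply CPoly_mul; [apply HA | apply HX]; assumption. }
  unfold Dmat, Bmat. apply CPoly_mul; [| apply HA; assumption].
  destruct (Nat.eqb (c / m) 0); [apply CPoly_opp, Hrowcol; lia|].
  destruct (Nat.eqb (c / m) (S ((r - 1) mod (N - 1)))); [apply Hrowcol; lia | apply CPoly_const].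
Qed.

From mathcomp Require all_boot all_algebra all_fingroup Rstruct.

Module Gram.
Import all_boot all_fingroup all_algebra Rstruct GRing.Theory Num.Theory.
Local Open Scope ring_scope.

Lemma Rsum_big K (f : nat -> R) : Rsum K f = \sum_(i < K) f i.
Proof. elim: K => [|K IH]; first by rewrite big_ord0. by rewrite big_ord_recr /= IH. Qed.

Lemma PolyR_big_sum d (I : Type) (r : seq I) (P : pred I) (F : I -> (nat -> R) -> R) :
  (forall i, PolyR d (F i)) -> PolyR d (fun x => \sum_(i <- r | P i) F i x).
Proof.
  move=> H; elim: r => [|a r IH].
    by apply: (PolyR_ext d (fun _ => 0)); [constructor | move=> x; rewrite big_nil].
  case Pa: (P a).
  - apply: (PolyR_ext d (fun x => F a x + \sum_(i <- r | P i) F i x)); first by constructor.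
    by move=> x; rewrite big_cons Pa.
  - by apply: (PolyR_ext d (fun x => \sum_(i <- r | P i) F i x)) => // x; rewrite big_cons Pa.
Qed.

Lemma PolyR_big_prod d (I : Type) (r : seq I) (P : pred I) (F : I -> (nat -> R) -> R) :
  (forall i, PolyR d (F i)) -> PolyR d (fun x => \prod_(i <- r | P i) F i x).
Proof.
  move=> H; elim: r => [|a r IH].
    by apply: (PolyR_ext d (fun _ => 1)); [constructor | move=> x; rewrite big_nil].
  case Pa: (P a).
  - apply: (PolyR_ext d (fun x => F a x * \prod_(i <- r | P i) F i x)); first by constructor.
    by move=> x; rewrite big_cons Pa.
  - by apply: (PolyR_ext d (fun x => \prod_(i <- r | P i) F i x)) => // x; rewrite big_cons Pa.
Qed.

Lemma PolyR_det d k (A : (nat -> R) -> 'M[R]_k) :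
  (forall i j, PolyR d (fun x => A x i j)) -> PolyR d (fun x => \det (A x)).
Proof.
  move=> H; apply: PolyR_big_sum => s.
  by apply: (Pmul d _ _ (Pconst d _)); apply: PolyR_big_prod.
Qed.

Lemma kernel_trivial_gram_det p q (A : 'M[R]_(p, q)) :
  (forall w : 'cV_q, A *m w = 0 -> w = 0) <-> \det (A^T *m A) != 0.
Proof.
  split=> [Hker | Hdet w Hw].
  - apply/negP => /det0P [u Hu0 HuG].
    set y := A *m u^T.
    have Hyy : y^T *m y = 0 by rewrite /y trmx_mul trmxK mulmxA -(mulmxA u) HuG mul0mx.
    have Hy : y = 0.
      apply/matrixP => i j; rewrite [j]ord1 [RHS]mxE.
      have E : (y^T *m y) 0 0 = 0 by rewrite Hyy mxE.
      rewrite mxE in E.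
      have Hnn k : predT k -> 0 <= y^T 0 k * y k 0 by rewrite mxE -expr2 sqr_ge0.
      move/eqP: (psumr_eq0P Hnn E (i := i) isT).
      by rewrite mxE mulf_eq0 orbb => /eqP.
    have Hu : u = 0 by rewrite -[u]trmxK (Hker _ Hy) trmx0.
    by rewrite Hu eqxx in Hu0.
  - have Hu : A^T *m A \in unitmx by rewrite unitmxE unitfE.
    by rewrite -(mulKmx Hu w) -mulmxA Hw !mulmx0.
Qed.

Section Realification.
Variables nr nc : nat.

Definition re_mx (M : cmat) : 'M[R]_(nr, nc) := \matrix_(i, j) fst (M i j).
Definition im_mx (M : cmat) : 'M[R]_(nr, nc) := \matrix_(i, j) snd (M i j).

(* The real matrix of [M] acting on [C^nc = R^nc x R^nc]. *)
Definition realify (M : cmat) : 'M[R]_(nr + nr, nc + nc) :=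
  block_mx (re_mx M) (- im_mx M) (im_mx M) (re_mx M).

Definition gram_det (M : cmat) : R := \det ((realify M)^T *m realify M).

Lemma realify_mul (M : cmat) (v : nat -> C) (a b : 'cV[R]_nc) :
  (forall c : 'I_nc, v c = (a c 0, b c 0)) ->
  realify M *m col_mx a b = col_mx (\col_(r < nr) fst (Csum nc (fun c => Cmul (M r c) (v c))))
                                   (\col_(r < nr) snd (Csum nc (fun c => Cmul (M r c) (v c)))).
Proof.
  move=> Hv; rewrite mul_block_col mulNmx; congr col_mx; apply/matrixP => r j; rewrite [j]ord1 !mxE.
  - rewrite fst_Csum Rsum_big -sumrN -big_split /=.
    by apply: eq_bigr => c _; rewrite !mxE Hv.
  - rewrite snd_Csum Rsum_big -big_split /=.
    by apply: eq_bigr => c _; rewrite !mxE Hv /= addrC.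
Qed.

Lemma full_column_rank_realify (M : cmat) :
  full_column_rank nr nc M <-> forall w : 'cV_(nc + nc), realify M *m w = 0 -> w = 0.
Proof.
  split=> [Hfr w Hw | Hker v Hv c Hc].
  - pose v c := if insub c : option 'I_nc is Some i then (usubmx w i 0, dsubmx w i 0) else C0.
    have Hvw (c : 'I_nc) : v c = (usubmx w c 0, dsubmx w c 0) by rewrite /v valK.
    move: Hw; rewrite -[w]vsubmxK (realify_mul M v) // => /eqP; rewrite col_mx_eq0 => /andP[/eqP H1 /eqP H2].
    have Hv0 : forall c, (c < nc)%coq_nat -> v c = C0.
      apply: Hfr => r /ltP Hr.
      move/matrixP/(_ (Ordinal Hr) 0): H1; move/matrixP/(_ (Ordinal Hr) 0): H2; rewrite !mxE /= => H2 H1.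
      by rewrite (surjective_pairing (Csum _ _)) H1 H2.
    apply/matrixP => i j; rewrite [j]ord1 [RHS]mxE.
    have Hc (c : 'I_nc) := Hv0 c (elimT ltP (ltn_ord c)).
    by case: (split_ordP i) => c ->; move: (Hc c); rewrite Hvw;
      case=> Ha Hb; rewrite ?col_mxEu ?col_mxEd.
  - set a : 'cV[R]_nc := \col_c fst (v c); set b : 'cV[R]_nc := \col_c snd (v c).
    have Hvab (c' : 'I_nc) : v c' = (a c' 0, b c' 0) by rewrite !mxE; case: (v c').
    have Hab : col_mx a b = 0.
      apply: Hker; rewrite (realify_mul M v) //.
      apply/matrixP => i j; rewrite [j]ord1 [RHS]mxE.
      by case: (split_ordP i) => r ->; rewrite ?col_mxEu ?col_mxEd mxE Hv //; apply/ltP.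
    move/eqP: Hab; rewrite col_mx_eq0 => /andP[/eqP Ha /eqP Hb].
    have Hc' : (c < nc)%N by apply/ltP.
    by rewrite (Hvab (Ordinal Hc')) Ha Hb mxE.
Qed.

Lemma full_column_rank_gram_det (M : cmat) : full_column_rank nr nc M <-> gram_det M <> 0.
Proof.
  rewrite full_column_rank_realify kernel_trivial_gram_det.
  by split=> [/eqP | H]; last apply/eqP.
Qed.

Lemma PolyR_realify d (M : (nat -> R) -> cmat) :
  (forall r c, (r < nr)%coq_nat -> (c < nc)%coq_nat -> CPoly d (fun x => M x r c)) ->
  forall i j, PolyR d (fun x => realify (M x) i j).
Proof.
  move=> HM i j.
  case: (split_ordP i) => r ->; case: (split_ordP j) => c ->;
    have [Hre Him] := HM r c (elimT ltP (ltn_ord r)) (elimT ltP (ltn_ord c)).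
  - by apply: (PolyR_ext _ _ _ Hre) => x; rewrite /realify block_mxEul mxE.
  - by apply: (PolyR_ext _ _ _ (PolyR_opp _ _ Him)) => x; rewrite /realify block_mxEur !mxE.
  - by apply: (PolyR_ext _ _ _ Him) => x; rewrite /realify block_mxEdl mxE.
  - by apply: (PolyR_ext _ _ _ Hre) => x; rewrite /realify block_mxEdr mxE.
Qed.

Lemma PolyR_gram_det d (M : (nat -> R) -> cmat) :
  (forall r c, (r < nr)%coq_nat -> (c < nc)%coq_nat -> CPoly d (fun x => M x r c)) ->
  PolyR d (fun x => gram_det (M x)).
Proof.
  move=> HM; apply: PolyR_det => i j.
  apply: (PolyR_ext d (fun x => \sum_k realify (M x) k i * realify (M x) k j)); last first.
    by move=> x; rewrite [RHS]mxE; apply: eq_bigr => k _; rewrite [in RHS]mxE.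
  by apply: PolyR_big_sum => k; apply: Pmul; apply: PolyR_realify.
Qed.

End Realification.
End Gram.

Theorem claim1 (n m N : nat) :
  (0 < n)%nat -> (0 < m)%nat -> (0 < N)%nat -> (m < n)%nat ->
  (n - 1 <= N * (n - m))%nat -> (N <= m)%nat ->
  lebesgue_null (2 * (m * N) + 2 * (n * m))
    (fun x => ~ full_column_rank (1 + n * (N - 1)) (m * N)
                  (bigM n m N (decX m x) (decA n m N x))).
Proof.
  intros Hn Hm HN Hmn Hcount HNm.
  set (d := (2 * (m * N) + 2 * (n * m))%nat).
  set (gram := fun x => Gram.gram_det (1 + n * (N - 1)) (m * N) (bigM n m N (decX m x) (decA n m N x))).
  apply null_mono with (F := fun x => gram x = 0).
  { intros x Hx. apply NNPP. intros H. apply Hx, Gram.full_column_rank_gram_det, H. }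
  assert (Hgram : PolyR d gram) by (apply Gram.PolyR_gram_det; intros; apply CPoly_bigM; assumption).
  replace d with (S (d - 1)) in Hgram |- * by (unfold d; lia).
  apply poly_zeros_null; [exact Hgram|].
  exists (witness_point n m N).
  apply Gram.full_column_rank_gram_det, witness_full_column_rank; assumption.
Qed.
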